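(* Let $k$ be an algebraically closed field, $n\ge1$, $1\le g\le n$, let $K$ be as in the context, let $\lambda\in k\setminus\{0\}$ and $m\in\mathbb N$. Let $R_m^\lambda$ be the full subcategory of $\operatorname{rep}K$ with objects $V_d^\lambda$, $1\le d\le m+2$. Let $Q_m^\lambda$ be the quiver with vertices $(\lambda,1),\dots,(\lambda,m+2)$ and arrows $\pi_\lambda(r):(\lambda,r+1)\to(\lambda,r)$ and $\rho_\lambda(r):(\lambda,r)\to(\lambda,r+1)$ for $r=1,\dots,m+1$. Let $F_\lambda:kQ_m^\lambda\to R_m^\lambda$ be the $k$-linear functor with $F_\lambda(\lambda,r)=V_r^\lambda$, where $F_\lambda\pi_\lambda(r):V_{r+1}^\lambda\to V_r^\lambda$ is given at every vertex of $K$ by the matrix $\begin{pmatrix}\mathbf 1_r & 0\end{pmatrix}\in k^{r\times(r+1)}$ and $F_\lambda\rho_\lambda(r):V_r^\lambda\to V_{r+1}^\lambda$ is given at every vertex by $\begin{pmatrix}0\\ \mathbf 1_r\end{pmatrix}\in k^{(r+1)\times r}$. Then $F_\lambda$ induces an isomorphism between the quotient of the path category $kQ_m^\lambda$ by the ideal generated by (1) $\pi_\lambda(r+1)\circ\rho_\lambda(r+1)=\rho_\lambda(r)\circ\pi_\lambda(r)$ for $r=1,\dots,m$, and (2) $\pi_\lambda(1)\circ\rho_\lambda(1)=0$, and the $k$-category $R_m^\lambda$.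
   Context: $K$: quiver with vertices $0,\dots,n$ and arrows $\beta_x:x\to x+1$ ($0\le x\le g-1$) and $\alpha_x:x+1\to x$ ($g\le x\le n$), indices modulo $n+1$; $\operatorname{rep}K$ is the category of finite-dimensional representations. For $d\ge1$, $V_d^\lambda$ is the representation with $V_d^\lambda(x)=k^d$ at every vertex, $V_d^\lambda(\beta_{g-1})=\lambda\,\mathrm{id}_d+J_d$, and $V_d^\lambda(\gamma)=\mathrm{id}_d$ for every other arrow $\gamma$, where $J_d$ is the $d\times d$ matrix with entries $1$ directly below the diagonal and $0$ elsewhere. $\mathbf 1_r$ is the $r\times r$ identity matrix. Composition $\circ$ is written right to left (apply the right factor first). *)

From HB Require Import structures.
From mathcomp Require Import all_boot all_order all_algebra.
Set Implicit Arguments. Unset Strict Implicit. Unset Printing Implicit Defensive.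
Import GRing.Theory.
Local Open Scope ring_scope.

(* ---------- The quiver K ----------
   Vertices 0..n are 'I_n.+1.  There is one arrow for each x : 'I_n.+1:
   for x < g it is beta_x : x -> x+1, for x >= g it is alpha_x : x+1 -> x
   (indices mod n+1, x+1 computed by ordS). *)
Definition Ksrc (n g : nat) (x : 'I_n.+1) : 'I_n.+1 :=
  if (x < g)%N then x else ordS x.
Definition Ktgt (n g : nat) (x : 'I_n.+1) : 'I_n.+1 :=
  if (x < g)%N then ordS x else x.

(* finite-dimensional representations of K: a dimension at each vertex and a
   matrix for each arrow; matrices act on column vectors, so a linear map
   k^p -> k^q is a q x p matrix and composition g o f is  g *m f. *)
Record qrep (k : fieldType) (n g : nat) := QRep {
  qdim : 'I_n.+1 -> nat;
  qmat : forall x : 'I_n.+1, 'M[k]_(qdim (Ktgt g x), qdim (Ksrc g x)) }.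

Definition is_rep_hom (k : fieldType) (n g : nat) (V W : qrep k n g)
  (f : forall x : 'I_n.+1, 'M[k]_(qdim W x, qdim V x)) : Prop :=
  forall x : 'I_n.+1, f (Ktgt g x) *m qmat V x = qmat W x *m f (Ksrc g x).

Definition Jnil (k : fieldType) (d : nat) : 'M[k]_d :=
  \matrix_(i, j) ((i : nat) == j.+1)%:R.

(* V_d^lam : k^d everywhere, lam 1 + J_d on beta_{g-1}, identity elsewhere *)
Definition Vrep (k : fieldType) (n g : nat) (lam : k) (d : nat) : qrep k n g :=
  @QRep k n g (fun _ => d)
    (fun x => if (val x == g.-1)%N then lam%:M + Jnil k d else 1%:M).

(* ---------- The quiver Q_m^lam and its path category ----------
   Vertex (lam, r) is represented by r : nat (1 <= r <= m+2).  Between r and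
   r+1 there are exactly the two arrows rho(r) : r -> r+1 and
   pi(r) : r+1 -> r, so a path starting at a is a word w : seq bool listing
   its arrows in the order they are traversed: true = go up (rho),
   false = go down (pi). *)
Definition qstep (a : nat) (b : bool) : nat := if b then a.+1 else a.-1.
Fixpoint qend (a : nat) (w : seq bool) : nat :=
  if w is b :: w' then qend (qstep a b) w' else a.
Fixpoint qvalid (m a : nat) (w : seq bool) : bool :=
  (1 <= a <= m.+2)%N &&
  match w with
  | [::] => true
  | b :: w' => (if b then (a <= m.+1)%N else (2 <= a)%N) && qvalid m (qstep a b) w'
  end.
Definition qpath (m a b : nat) (w : seq bool) : bool := qvalid m a w && (qend a w == b).

(* F pi(r) = (1_r 0) : k^{r+1} -> k^r   (here a = r+1) *)
Definition piM (k : fieldType) (a : nat) : 'M[k]_(a.-1, a) :=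
  \matrix_(i, j) ((i : nat) == j)%:R.
(* F rho(r) = (0 ; 1_r) : k^r -> k^{r+1}   (here a = r) *)
Definition rhoM (k : fieldType) (a : nat) : 'M[k]_(a.+1, a) :=
  \matrix_(i, j) ((i : nat) == j.+1)%:R.
Definition stepM (k : fieldType) (a : nat) (b : bool) : 'M[k]_(qstep a b, a) :=
  if b as b' return 'M[k]_(qstep a b', a) then rhoM k a else piM k a.
Fixpoint Fword (k : fieldType) (a : nat) (w : seq bool) : 'M[k]_(qend a w, a) :=
  match w return 'M[k]_(qend a w, a) with
  | [::] => 1%:M
  | b :: w' => Fword k (qstep a b) w' *m stepM k a b
  end.
Definition FQ (k : fieldType) (a b : nat) (w : seq bool) : 'M[k]_(b, a) :=
  conform_mx 0 (Fword k a w).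

(* Morphisms of kQ_m^lam from (lam,a) to (lam,b): formal k-linear
   combinations of paths, represented by finite lists of (coefficient, path);
   two lists denote the same morphism iff they have the same coefficients. *)
Definition kQelt (k : fieldType) (m a b : nat) (x : seq (k * seq bool)) : bool :=
  all (fun c => qpath m a b c.2) x.
Definition qcoef (k : fieldType) (x : seq (k * seq bool)) (w : seq bool) : k :=
  \sum_(c <- x | c.2 == w) c.1.
(* F_lam on a morphism (its common matrix at every vertex of K) *)
Definition Fform (k : fieldType) (a b : nat) (x : seq (k * seq bool)) : 'M[k]_(b, a) :=
  \sum_(c <- x) c.1 *: FQ k a b c.2.

(* The relations: Some r (1 <= r <= m) is relation (1) at vertex r+1:
   pi(r+1) o rho(r+1) - rho(r) o pi(r);  None is relation (2) at vertex 1: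
   pi(1) o rho(1). *)
Definition rel_ok (m : nat) (i : option nat) : bool :=
  if i is Some r then (1 <= r <= m)%N else true.
Definition relv (i : option nat) : nat := if i is Some r then r.+1 else 1%N.
Definition rel_elem (k : fieldType) (i : option nat) : seq (k * seq bool) :=
  if i is Some _ then [:: (1, [:: true; false]); (-1, [:: false; true])]
  else [:: (1, [:: true; false])].

(* expansion of  sum t * (p o rel_i o q)  with q : a -> relv i, p : relv i -> b *)
Definition ideal_expand (k : fieldType) (y : seq (k * seq bool * option nat * seq bool))
  : seq (k * seq bool) :=
  flatten [seq (let: (t, q, i, p) := u in
                [seq (t * s.1, q ++ s.2 ++ p) | s <- rel_elem k i]) | u <- y].

Definition in_ideal (k : fieldType) (m a b : nat) (x : seq (k * seq bool)) : Prop :=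
  exists y : seq (k * seq bool * option nat * seq bool),
    all (fun u => let: (t, q, i, p) := u in
           [&& rel_ok m i, qpath m a (relv i) q & qpath m (relv i) b p]) y /\
    forall w, qcoef x w = qcoef (ideal_expand y) w.

Arguments is_rep_hom {k n g} V W f.
Arguments kQelt {k} m a b x.
Arguments Fform {k} a b x.
Arguments in_ideal {k} m a b x.

From HB Require Import structures.
From mathcomp Require Import all_boot all_order all_algebra.
From mathcomp Require Import zify ring.
Import GRing.Theory.
Set Implicit Arguments. Unset Strict Implicit.
Local Open Scope ring_scope.

(* A path of Q_m is a word of up-steps [true] (rho) and down-steps [false] (pi), and F sends a
   path with u up-steps to the shift matrix with ones on the u-th subdiagonal.  Relation (1) moves
   every down-step in front of the up-steps and relation (2) kills it once it reaches vertex 1, so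
   modulo the ideal a path a -> b is zero or congruent to the normal word going down d times and
   then up u times, where d = a + u - b < a.  Distinct normal words a -> b have distinct u < b, hence linearly
   independent images; this identifies the kernel of F with the ideal.  Conversely, a morphism
   V_a -> V_b is the same matrix at every vertex (K is a cycle whose arrows other than beta_(g-1)
   act as identities) and commutes with the nilpotent Jordan blocks J, hence is a lower
   triangular Toeplitz matrix, i.e. a combination of those shifts. *)

Lemma nseq_rcons (T : Type) n (t : T) : nseq n t ++ [:: t] = nseq n.+1 t.
Proof. by rewrite -addn1 nseqD. Qed.

Definition ups (w : seq bool) := count id w.
Definition downs (w : seq bool) := count negb w.

Lemma ups_cat w1 w2 : ups (w1 ++ w2) = (ups w1 + ups w2)%N.
Proof. exact: count_cat. Qed.

Lemma downs_cat w1 w2 : downs (w1 ++ w2) = (downs w1 + downs w2)%N.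
Proof. exact: count_cat. Qed.

Lemma qend_cat a w1 w2 : qend a (w1 ++ w2) = qend (qend a w1) w2.
Proof. by elim: w1 a => //= s w1 IH a. Qed.

Lemma qvalid_vertex m a w : qvalid m a w -> (1 <= a <= m.+2)%N.
Proof. by case: w => [|s w] /= /andP[]. Qed.

Lemma qvalid_cat m a w1 w2 :
  qvalid m a (w1 ++ w2) = qvalid m a w1 && qvalid m (qend a w1) w2.
Proof.
elim: w1 a => [|s w1 IH] a /=; last by rewrite IH !andbA.
by case h: (qvalid m a w2); rewrite ?andbF // (qvalid_vertex h).
Qed.

Lemma qend_le_ups a w : (qend a w <= a + ups w)%N.
Proof.
rewrite /ups; elim: w a => [|[] w IH] a /=; first lia.
  by have := IH a.+1; lia.
by have := IH a.-1; lia.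
Qed.

Lemma qend_downs m a w : qvalid m a w -> (qend a w + downs w = a + ups w)%N.
Proof.
rewrite /ups /downs; elim: w a => [|[] w IH] a /=; first by rewrite !addn0.
  by case/andP=> _ /andP[_ /IH]; lia.
by case/andP=> _ /andP[a2 /IH]; lia.
Qed.

Lemma qpath_cat m a v c q r :
  qpath m a v q -> qpath m v c r -> qpath m a c (q ++ r).
Proof. by rewrite /qpath qvalid_cat qend_cat => /andP[-> /eqP ->] /andP[-> ->]. Qed.

Lemma qpath_nil m a : (1 <= a <= m.+2)%N -> qpath m a a [::].
Proof. by move=> h; rewrite /qpath /= h eqxx. Qed.

Lemma qpath_up m a : (a <= m.+1)%N -> (1 <= a)%N -> qpath m a a.+1 [:: true].
Proof. by move=> ha a1; rewrite /qpath /= !andbT a1 ha eqxx; lia. Qed.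

Lemma qpath_nseqT m a u :
  (1 <= a)%N -> (a + u <= m.+2)%N -> qpath m a (a + u) (nseq u true).
Proof.
elim: u a => [|u IH] a a1 au; first by rewrite addn0 qpath_nil //; lia.
rewrite -addSnnS; apply: (qpath_cat (qpath_up _ _)) (IH _ _ _); lia.
Qed.

Lemma qpath_nseqF m a d :
  (d < a)%N -> (a <= m.+2)%N -> qpath m a (a - d) (nseq d false).
Proof.
elim: d a => [|d IH] a da am; first by rewrite subn0 qpath_nil //; lia.
have -> : (a - d.+1 = a.-1 - d)%N by lia.
have down : qpath m a a.-1 [:: false] by rewrite /qpath /= !andbT eqxx; lia.
apply: (qpath_cat down (IH _ _ _)); lia.
Qed.

Section LinearCombinations.
Variable k : fieldType.
Implicit Types x : seq (k * seq bool).

Lemma qcoef_nil w : qcoef ([::] : seq (k * seq bool)) w = 0.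
Proof. exact: big_nil. Qed.

Lemma qcoef_cons c x w :
  qcoef (c :: x) w = (if c.2 == w then c.1 else 0) + qcoef x w.
Proof. by rewrite /qcoef big_cons; case: ifP; rewrite ?add0r. Qed.

Lemma qcoef_cat x1 x2 w : qcoef (x1 ++ x2) w = qcoef x1 w + qcoef x2 w.
Proof. exact: big_cat. Qed.

Lemma qcoef_scale t x w : qcoef [seq (t * c.1, c.2) | c <- x] w = t * qcoef x w.
Proof. by rewrite /qcoef big_map big_distrr. Qed.

Lemma big_qcoef (V : lmodType k) x (G : seq bool -> V) (S : seq (seq bool)) :
  uniq S -> {subset [seq c.2 | c <- x] <= S} ->
  \sum_(c <- x) c.1 *: G c.2 = \sum_(w <- S) qcoef x w *: G w.
Proof.
move=> uS; elim: x => [|c x IH] sub.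
  by rewrite big_nil big1 // => w _; rewrite qcoef_nil scale0r.
rewrite big_cons IH => [|w xw]; last by apply: sub; rewrite inE xw orbT.
under [RHS]eq_bigr do rewrite qcoef_cons scalerDl.
rewrite big_split /=; congr (_ + _).
have cS : c.2 \in S by apply: sub; rewrite inE eqxx.
rewrite (bigD1_seq c.2) //= eqxx big1 ?addr0 // => w /negPf cw.
by rewrite eq_sym cw scale0r.
Qed.

Lemma eq_big_qcoef (V : lmodType k) x x' (G : seq bool -> V) :
  (forall w, qcoef x w = qcoef x' w) ->
  \sum_(c <- x) c.1 *: G c.2 = \sum_(c <- x') c.1 *: G c.2.
Proof.
move=> E; pose S := undup ([seq c.2 | c <- x] ++ [seq c.2 | c <- x']).
have uS : uniq S by exact: undup_uniq.
rewrite (@big_qcoef _ x _ S uS) => [|w xw]; last by rewrite mem_undup mem_cat xw.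
rewrite (@big_qcoef _ x' _ S uS) => [|w xw]; last by rewrite mem_undup mem_cat xw orbT.
by apply: eq_bigr => w _; rewrite E.
Qed.

Lemma eq_qcoef_map x x' (H : seq bool -> seq bool) :
  (forall w, qcoef x w = qcoef x' w) ->
  forall w, qcoef [seq (c.1, H c.2) | c <- x] w = qcoef [seq (c.1, H c.2) | c <- x'] w.
Proof.
move=> E w; have qcoefE y : qcoef [seq (c.1, H c.2) | c <- y] w =
    \sum_(c <- y) c.1 *: ((H c.2 == w)%:R : k^o).
  rewrite /qcoef big_map big_mkcond; apply: eq_bigr => c _.
  by case: eqP => _; [exact: esym (mulr1 _) | exact: esym (mulr0 _)].
by rewrite !qcoefE (eq_big_qcoef (fun v => (H v == w)%:R : k^o) E).
Qed.

Lemma ideal_expand_cat y1 y2 :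
  ideal_expand (y1 ++ y2) = ideal_expand y1 ++ ideal_expand y2 :> seq (k * seq bool).
Proof. by rewrite /ideal_expand map_cat flatten_cat. Qed.

Lemma ideal_expand_cons t q i p y :
  ideal_expand ((t, q, i, p) :: y) =
  [seq (t * s.1, q ++ s.2 ++ p) | s <- rel_elem k i] ++ ideal_expand y.
Proof. by []. Qed.

End LinearCombinations.

Section Ideal.
Variables (k : fieldType) (m : nat).
Implicit Types x : seq (k * seq bool).

Lemma in_ideal_ext a b x x' :
  (forall w, qcoef x w = qcoef x' w) -> in_ideal m a b x -> in_ideal m a b x'.
Proof. by move=> E [y [Hy C]]; exists y; split=> // w; rewrite -E. Qed.

Lemma in_ideal_nil a b : in_ideal m a b ([::] : seq (k * seq bool)).
Proof. by exists [::]. Qed.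

Lemma in_ideal_cat a b x1 x2 :
  in_ideal m a b x1 -> in_ideal m a b x2 -> in_ideal m a b (x1 ++ x2).
Proof.
move=> [y1 [H1 C1]] [y2 [H2 C2]]; exists (y1 ++ y2).
by rewrite all_cat H1 H2; split=> // w; rewrite ideal_expand_cat !qcoef_cat C1 C2.
Qed.

Lemma in_ideal_scale a b t x :
  in_ideal m a b x -> in_ideal m a b [seq (t * c.1, c.2) | c <- x].
Proof.
move=> [y [Hy C]]; exists [seq (let: (s, q, i, p) := u in (t * s, q, i, p)) | u <- y].
split; first by rewrite all_map; apply: sub_all Hy => -[[[s q] i] p].
move=> w; rewrite qcoef_scale C; elim: y {Hy C} => [|[[[s q] i] p] y IH].
  by rewrite qcoef_nil mulr0.
rewrite map_cons !ideal_expand_cons !qcoef_cat -IH mulrDr; congr (_ + _).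
by case: i => [r|]; rewrite /= !qcoef_cons !qcoef_nil; do ![case: eqP => _]; rewrite /=; ring.
Qed.

Lemma in_ideal_compose a v v' b q p x :
  in_ideal m v v' x -> qpath m a v q -> qpath m v' b p ->
  in_ideal m a b [seq (c.1, q ++ c.2 ++ p) | c <- x].
Proof.
move=> [y [Hy C]] hq hp.
exists [seq (let: (t, q', i, p') := u in (t, q ++ q', i, p' ++ p)) | u <- y]; split.
  rewrite all_map; apply: sub_all Hy => -[[[t q'] i] p'] /and3P[ri hq' hp'].
  by rewrite /= ri (qpath_cat hq hq') (qpath_cat hp' hp).
move=> w; rewrite (eq_qcoef_map (fun w => q ++ w ++ p) C); congr qcoef.
elim: y {Hy C} => [|[[[t q'] i] p'] y IH] //.
rewrite map_cons !ideal_expand_cons map_cat IH; congr (_ ++ _).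
by case: i => [r|] /=; rewrite -!catA.
Qed.

Definition qcong a b (w1 w2 : seq bool) := @in_ideal k m a b [:: (1, w1); (-1, w2)].
Definition qnull a b (w : seq bool) := @in_ideal k m a b [:: (1, w)].

Lemma qcong_refl a b w : qcong a b w w.
Proof.
apply: in_ideal_ext (in_ideal_nil a b) => w'.
by rewrite !qcoef_cons !qcoef_nil; case: eqP; rewrite ?addr0 ?subrr.
Qed.

Lemma qcong_trans a b w1 w2 w3 : qcong a b w1 w2 -> qcong a b w2 w3 -> qcong a b w1 w3.
Proof.
move=> h12 h23; apply: in_ideal_ext (in_ideal_cat h12 h23) => w /=.
by rewrite !qcoef_cons !qcoef_nil; do ![case: eqP => _]; rewrite /=; ring.
Qed.

Lemma qcong_null a b w1 w2 : qcong a b w1 w2 -> qnull a b w2 -> qnull a b w1.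
Proof.
move=> h12 h2; apply: in_ideal_ext (in_ideal_cat h12 h2) => w /=.
by rewrite !qcoef_cons !qcoef_nil; do ![case: eqP => _]; rewrite /=; ring.
Qed.

Lemma qcong_compose a v v' b q p w1 w2 : qcong v v' w1 w2 ->
  qpath m a v q -> qpath m v' b p -> qcong a b (q ++ w1 ++ p) (q ++ w2 ++ p).
Proof. exact: in_ideal_compose. Qed.

Lemma qnull_compose a v v' b q p w : qnull v v' w ->
  qpath m a v q -> qpath m v' b p -> qnull a b (q ++ w ++ p).
Proof. exact: in_ideal_compose. Qed.

Lemma qcong_commute v b p : (2 <= v <= m.+1)%N -> qpath m v b p ->
  qcong v b [:: true, false & p] [:: false, true & p].
Proof.
move=> v2m hp; exists [:: (1, [::], Some v.-1, p)].
rewrite /= /relv prednK; last lia.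
rewrite hp qpath_nil ?andbT; last lia.
split; first lia.
by move=> w; rewrite /ideal_expand /= !qcoef_cons !qcoef_nil !mul1r.
Qed.

Lemma qnull_bottom b p : qpath m 1 b p -> qnull 1 b [:: true, false & p].
Proof.
move=> hp; exists [:: (1, [::], None, p)]; rewrite /= hp.
by split=> // w; rewrite /ideal_expand /= !qcoef_cons !qcoef_nil mul1r.
Qed.

Lemma qcong_ups_down v u : (2 <= v)%N -> (v + u <= m.+2)%N ->
  qcong v (v + u).-1 (nseq u true ++ [:: false]) (false :: nseq u true).
Proof.
elim: u v => [|u IH] v v2 vu; first exact: qcong_refl.
have -> : (v + u.+1).-1 = (v + u)%N by lia.
have up : qpath m v v.+1 [:: true] by apply: qpath_up; lia.
have top : (1 <= v + u <= m.+2)%N by lia.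
have vu' : (v.+1 + u <= m.+2)%N by rewrite addSnnS.
have slide := qcong_compose (IH v.+1 (ltnW v2) vu') up (qpath_nil top).
rewrite /= !cats0 in slide; apply: qcong_trans slide _.
by apply: qcong_commute; [lia | apply: qpath_nseqT; lia].
Qed.

Lemma qnull_ups_down u : (u <= m)%N -> qnull 1 u.+1 (nseq u.+1 true ++ [:: false]).
Proof.
move=> um; have up : qpath m 1 2 [:: true] by apply: qpath_up; lia.
have top : (1 <= u.+1 <= m.+2)%N by lia.
have slide := qcong_compose (qcong_ups_down (leqnn 2) (um : 2 + u <= m.+2)%N) up (qpath_nil top).
rewrite /= !cats0 in slide; apply: qcong_null slide (qnull_bottom _).
by rewrite -[u.+1]add1n; apply: qpath_nseqT.
Qed.

End Ideal.

Definition normal_word (d u : nat) := nseq d false ++ nseq u true.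

Lemma ups_normal_word d u : ups (normal_word d u) = u.
Proof. by rewrite /normal_word ups_cat /ups !count_nseq /= mul0n mul1n. Qed.

Lemma qpath_normal_word m a d u : (d < a <= m.+2)%N -> (a - d + u <= m.+2)%N ->
  qpath m a (a - d + u) (normal_word d u).
Proof. by move=> da du; apply: qpath_cat (qpath_nseqF _ _) (qpath_nseqT _ _); lia. Qed.

Section NormalForm.
Variables (k : fieldType) (m : nat).
Local Notation qcong := (qcong k m).
Local Notation qnull := (qnull k m).

Lemma qcong_normal_word_down a d u :
  (d < a <= m.+2)%N -> (a - d + u <= m.+2)%N -> (2 <= a - d + u)%N ->
  if (d.+1 < a)%N then
    qcong a (a - d + u).-1 (normal_word d u ++ [:: false]) (normal_word d.+1 u)
  else qnull a (a - d + u).-1 (normal_word d u ++ [:: false]).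
Proof.
move=> /andP[da am] du du2; have down : qpath m a (a - d) _ := qpath_nseqF da am.
have end_v : (1 <= (a - d + u).-1 <= m.+2)%N by lia.
rewrite /normal_word -catA; case: ltnP => d1a.
  have slide := qcong_compose (qcong_ups_down k (_ : 2 <= a - d)%N du) down (qpath_nil end_v).
  by rewrite !cats0 in slide; rewrite -nseq_rcons -catA; apply: slide; lia.
case: u du du2 end_v => [|u] du du2 end_v; first lia.
have ad : a = d.+1 by lia.
subst a; rewrite subSnn in down end_v du *.
have vanish := qnull_compose (qnull_ups_down k (_ : u <= m)%N) down (qpath_nil end_v).
by rewrite cats0 in vanish; apply: vanish; lia.
Qed.

Lemma qcong_normal_form a w : qvalid m a w ->
  if (downs w < a)%N then qcong a (qend a w) w (normal_word (downs w) (ups w))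
  else qnull a (qend a w) w.
Proof.
elim/last_ind: w => [|w s IH].
  by case: a => [|a] /qvalid_vertex //= _; apply: qcong_refl.
rewrite -cats1 qvalid_cat qend_cat downs_cat ups_cat => /andP[hw hs].
have am := qvalid_vertex hw; have vd := qend_downs hw.
move: (qend a w) hs vd (IH hw) => v hs vd {IH}.
have step : qpath m v (qend v [:: s]) [:: s] by rewrite /qpath hs eqxx.
have start := qpath_nil am.
case: s hs step => hs step; rewrite /= ?addn0 ?addn1.
  case: ifP => _ nf; last exact: qnull_compose nf start step.
  by have := qcong_compose nf start step; rewrite /normal_word /= -catA nseq_rcons.
case: (ltnP (downs w) a) => da nf; last first.
  rewrite ifF; last lia.
  exact: qnull_compose nf start step.
have nf' := qcong_compose nf start step.
have v2 : (2 <= v)%N by move: hs => /= /andP[_ /andP[]].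
have vm : (v <= m.+2)%N by have := qvalid_vertex hs; lia.
have down := @qcong_normal_word_down a (downs w) (ups w).
rewrite (_ : a - downs w + ups w = v)%N in down; last lia.
case: ifP down => _ down; [apply: qcong_trans nf' _ | apply: qcong_null nf' _];
  by apply: down; lia.
Qed.

End NormalForm.

Section ShiftMatrices.
Variable k : fieldType.

Lemma sum_delta_ord n (G : 'I_n -> k) c (cn : (c < n)%N) :
  \sum_(l < n) G l * ((l : nat) == c)%:R = G (Ordinal cn).
Proof.
rewrite (bigD1 (Ordinal cn)) //= eqxx mulr1 big1 ?addr0 // => l lc.
by rewrite (_ : _ == c = false) ?mulr0 //; apply: contraNF lc => /eqP lc; apply/eqP/val_inj.
Qed.

Lemma sum_delta_ord0 n (G : 'I_n -> k) c : (n <= c)%N ->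
  \sum_(l < n) G l * ((l : nat) == c)%:R = 0.
Proof.
move=> nc; rewrite big1 // => l _.
by rewrite (_ : _ == c = false) ?mulr0 //; have := ltn_ord l; lia.
Qed.

Definition shift_mx b a u : 'M[k]_(b, a) := \matrix_(i, j) ((i : nat) == j + u)%N%:R.

Lemma shift_mx_eq0 b a u : (b <= u)%N -> shift_mx b a u = 0.
Proof.
move=> bu; apply/matrixP => i j.
by rewrite !mxE (_ : _ == _ = false) //; have := ltn_ord i; lia.
Qed.

Lemma shift_mx_rhoM b a u : shift_mx b a.+1 u *m rhoM k a = shift_mx b a u.+1.
Proof.
apply/matrixP => i j; rewrite !mxE; under eq_bigr do rewrite !mxE.
have ja : (j.+1 < a.+1)%N := ltn_ord j.
by rewrite (sum_delta_ord (fun l : 'I_a.+1 => ((i : nat) == l + u)%N%:R) ja) /= addSnnS.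
Qed.

Lemma shift_mx_piM b a u : (b <= a.-1 + u)%N ->
  shift_mx b a.-1 u *m piM k a = shift_mx b a u.
Proof.
move=> bau; apply/matrixP => i j; rewrite !mxE; under eq_bigr do rewrite !mxE.
case: (ltnP j a.-1) => ja.
  by rewrite (sum_delta_ord (fun l : 'I_a.-1 => ((i : nat) == l + u)%N%:R) ja).
by rewrite sum_delta_ord0 // (_ : _ == _ = false) //; have := ltn_ord i; lia.
Qed.

Lemma Fword_shift a w : Fword k a w = shift_mx (qend a w) a (ups w).
Proof.
elim: w a => [|[] w IH] a /=.
- by apply/matrixP => i j; rewrite !mxE addn0 -val_eqE.
- by rewrite IH shift_mx_rhoM.
- by rewrite IH shift_mx_piM //; apply: qend_le_ups.
Qed.

Lemma FQ_shift m a b w : qpath m a b w -> FQ k a b w = shift_mx b a (ups w).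
Proof. by case/andP=> _ /eqP <-; rewrite /FQ Fword_shift conform_mx_id. Qed.

Lemma mulmx_JnilE n p (A : 'M[k]_(p, n.+1)) i (j : 'I_n.+1) :
  (A *m Jnil k n.+1) i j = if (j < n)%N then A i (inord j.+1) else 0.
Proof.
rewrite !mxE; under eq_bigr do rewrite !mxE.
case: ltnP => jn; last exact: sum_delta_ord0.
rewrite (sum_delta_ord _ (jn : j.+1 < n.+1)%N); congr (A _ _).
by apply: val_inj; rewrite /= inordK.
Qed.

Lemma Jnil_mulmxE n p (A : 'M[k]_(n.+1, p)) (i : 'I_n.+1) j :
  (Jnil k n.+1 *m A) i j = if (0 < i)%N then A (inord i.-1) j else 0.
Proof.
rewrite !mxE; under eq_bigr do rewrite !mxE mulrC.
case: i => [[|i] iltn] /=; first by rewrite big1 // => l _; rewrite mulr0.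
under eq_bigr do rewrite eqSS eq_sym.
rewrite (sum_delta_ord _ (ltnW iltn)); congr (A _ _); apply: val_inj.
by rewrite /= inordK // ltnW.
Qed.

Lemma shift_mx_Jnil b a u : (b <= a + u)%N ->
  shift_mx b a u *m Jnil k a = Jnil k b *m shift_mx b a u.
Proof.
move=> bau; apply/matrixP => i j; have := ltn_ord i; rewrite !mxE => ib.
under eq_bigr do rewrite !mxE.
under [RHS]eq_bigr do rewrite !mxE.
case: (ltnP j.+1 a) => hj.
  rewrite (sum_delta_ord (fun l : 'I_a => ((i : nat) == (l + u)%N)%:R) hj) /=.
  case: (ltnP (j + u) b) => hju.
    by rewrite (sum_delta_ord (fun l : 'I_b => ((i : nat) == l.+1)%:R) hju) /= addSn.
  rewrite (sum_delta_ord0 (fun l : 'I_b => ((i : nat) == l.+1)%:R)) //.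
  by rewrite (_ : _ == _ = false) //; lia.
rewrite (sum_delta_ord0 (fun l : 'I_a => ((i : nat) == (l + u)%N)%:R)) //.
case: (ltnP (j + u) b) => hju; last by rewrite sum_delta_ord0.
rewrite (sum_delta_ord (fun l : 'I_b => ((i : nat) == l.+1)%:R) hju) /=.
by rewrite (_ : _ == _ = false) //; lia.
Qed.

End ShiftMatrices.

Section Soundness.
Variables (k : fieldType) (m : nat).

Lemma Fform_cat a b (x1 x2 : seq (k * seq bool)) :
  Fform a b (x1 ++ x2) = Fform a b x1 + Fform a b x2.
Proof. exact: big_cat. Qed.

(* Both words of a relation are loops with one up-step, so [F] sends them to the same shift. *)
Lemma Fform_rel_elem a b t q i p :
  rel_ok m i -> qpath m a (relv i) q -> qpath m (relv i) b p ->
  Fform a b [seq (t * s.1, q ++ s.2 ++ p) | s <- rel_elem k i] = 0.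
Proof.
move=> ri hq hp; have pm := qvalid_vertex (proj1 (andP hp)).
have loop s : s \in rel_elem k i -> qpath m (relv i) (relv i) s.2 /\ ups s.2 = 1%N.
  case: i ri {hq hp} pm => [r|] /= ri pm; rewrite !inE.
    by case/orP=> /eqP ->; rewrite /qpath /= eqxx; split=> //; lia.
  by move=> /eqP ->; rewrite /qpath /= eqxx; split=> //; lia.
rewrite /Fform big_map.
rewrite (eq_big_seq (fun s => (t * s.1) *: shift_mx k b a (ups q + 1 + ups p))).
  rewrite -scaler_suml; case: i ri hq hp {pm loop} => [r|] _ hq hp.
    by rewrite !big_cons big_nil /= mulr1 mulrN1 addr0 subrr scale0r.
  have := qend_downs (proj1 (andP hp)); rewrite (eqP (proj2 (andP hp))) => bp.
  by rewrite shift_mx_eq0 ?scaler0 //; move: bp => /=; lia.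
move=> s /loop[hs us] /=.
by rewrite (FQ_shift k (qpath_cat hq (qpath_cat hs hp))) !ups_cat us addnA.
Qed.

Lemma Fform_vanishes_on_ideal a b (x : seq (k * seq bool)) : in_ideal m a b x -> Fform a b x = 0.
Proof.
case=> y [hy C]; rewrite /Fform (eq_big_qcoef (FQ k a b) C) -/(Fform a b _).
elim: y hy {C} => [|[[[t q] i] p] y IH] /=; first by rewrite /Fform big_nil.
case/andP=> /and3P[ri hq hp] /IH.
by rewrite ideal_expand_cons Fform_cat Fform_rel_elem // add0r.
Qed.

End Soundness.

Section Kernel.
Variables (k : fieldType) (m : nat).
Implicit Types x : seq (k * seq bool).

Definition normalize a x : seq (k * seq bool) :=
  [seq (c.1, normal_word (downs c.2) (ups c.2)) | c <- x & (downs c.2 < a)%N].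

Lemma in_ideal_sub_normalize a b x : kQelt m a b x ->
  exists2 x', in_ideal m a b x' & forall w, qcoef x w = qcoef x' w + qcoef (normalize a x) w.
Proof.
elim: x => [|c x IH] /=.
  by exists [::]; [exact: in_ideal_nil | move=> w; rewrite !qcoef_nil addr0].
case/andP=> /andP[hc /eqP cb] /IH[x' x'I x'E]; have := qcong_normal_form k hc; rewrite cb.
rewrite /normalize /=; case: ifP => _ /(in_ideal_scale c.1) /= nf.
  exists ([:: (c.1 * 1, c.2); (c.1 * -1, normal_word (downs c.2) (ups c.2))] ++ x').
    exact: in_ideal_cat.
  move=> w; rewrite /= !qcoef_cons x'E -/(normalize a x).
  by do ![case: eqP => _]; rewrite /=; ring.
exists ((c.1 * 1, c.2) :: x'); first exact: (in_ideal_cat nf x'I).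
by move=> w; rewrite !qcoef_cons x'E mulr1 addrA.
Qed.

Lemma Fform_col0 a b x (i : 'I_b) (j : 'I_a) : kQelt m a b x -> val j = 0%N ->
  Fform a b x i j = \sum_(c <- x | ups c.2 == i) c.1.
Proof.
move=> /allP hx j0; rewrite /Fform summxE [RHS]big_mkcond /=.
apply: eq_big_seq => c /hx hc.
by rewrite mxE (FQ_shift k hc) mxE j0 eq_sym; case: eqP; rewrite ?mulr1 ?mulr0.
Qed.

Lemma qcoef_normalize a b x w : kQelt m a b x ->
  qcoef (normalize a x) w =
    if (ups w < b)%N && (normal_word (a + ups w - b) (ups w) == w)
    then \sum_(c <- x | ups c.2 == ups w) c.1 else 0.
Proof.
move=> /allP hx; rewrite /qcoef /normalize big_map big_filter_cond big_mkcond /=.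
set C := (_ && _); have key c : c \in x ->
    (downs c.2 < a)%N && (normal_word (downs c.2) (ups c.2) == w) = C && (ups c.2 == ups w).
  case/hx/andP=> hc /eqP cb; have := qend_downs hc; rewrite cb => dc.
  rewrite -[downs _](addKn b) dc.
  have a1 := qvalid_vertex hc.
  case: (ups c.2 =P ups w) => uw.
    by rewrite uw andbT /C in dc *; congr (_ && _); apply/idP/idP; lia.
  rewrite andbF; apply/negbTE/negP => /andP[_ /eqP ew].
  by apply: uw; rewrite -ew ups_normal_word.
case: C key => key; last by rewrite big1_seq // => c /key ->.
by rewrite [RHS]big_mkcond; apply: eq_big_seq => c /key ->.
Qed.

Lemma Fform_kernel_in_ideal a b x :
  (0 < a)%N -> kQelt m a b x -> Fform a b x = 0 -> in_ideal m a b x.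
Proof.
move=> a0 hx F0; have [x' x'I x'E] := in_ideal_sub_normalize hx.
apply: in_ideal_ext x'I => w; rewrite x'E (qcoef_normalize _ hx).
case: ifP => [/andP[wb _] | _]; last by rewrite addr0.
have := @Fform_col0 a b x (Ordinal wb) (Ordinal a0) hx erefl; rewrite F0 mxE => <-.
by rewrite addr0.
Qed.

End Kernel.

(* Walking around the cycle from [h.+1] reaches every vertex before crossing the step at [h]. *)
Lemma cycle_constant (T : Type) n h (f : 'I_n.+1 -> T) : (h < n.+1)%N ->
  (forall x : 'I_n.+1, val x != h -> f x = f (ordS x)) -> forall v w, f v = f w.
Proof.
move=> hn step; pose o j : 'I_n.+1 := inord ((h.+1 + j) %% n.+1).
have o_val j : val (o j) = ((h.+1 + j) %% n.+1)%N by rewrite /= inordK // ltn_pmod.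
have oS j : ordS (o j) = o j.+1.
  by apply: val_inj; rewrite /= !o_val -addn1 modnDml addn1 addnS.
have o_const j : (j <= n)%N -> f (o j) = f (o 0%N).
  elim: j => // j IH jn; rewrite -oS -step ?IH 1?o_val; [by [] | lia |].
  case: (ltnP (h.+1 + j) n.+1) => hj; first by rewrite modn_small //; lia.
  by rewrite -(subnK hj) modnDr modn_small; lia.
suff o_onto v : exists2 j, (j <= n)%N & v = o j.
  by move=> v w; have [i ? ->] := o_onto v; have [j ? ->] := o_onto w; rewrite !o_const.
have vn := ltn_ord v; case: (ltnP h v) => hv.
  by exists (v - h.+1)%N; [lia | apply: val_inj; rewrite o_val subnKC // modn_small].
exists (v + n - h)%N; first lia.
apply: val_inj; rewrite o_val (_ : h.+1 + _ = v + n.+1)%N; last lia.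
by rewrite modnDr modn_small.
Qed.

Section Toeplitz.
Variables (k : fieldType) (a b : nat) (F : 'M[k]_(b.+1, a.+1)).
Hypothesis FJ : F *m Jnil k a.+1 = Jnil k b.+1 *m F.
Let Fn i j := F (inord i) (inord j).

Let Fn_step i j : (i <= b)%N -> (j < a)%N -> Fn i j.+1 = if (0 < i)%N then Fn i.-1 j else 0.
Proof.
move=> ib ja; have := congr1 (fun M : 'M_(b.+1, a.+1) => M (inord i) (inord j)) FJ.
by rewrite /= mulmx_JnilE Jnil_mulmxE !inordK ?ja //; lia.
Qed.

Let Fn_last i : (i < b)%N -> Fn i a = 0.
Proof.
move=> ib; have := congr1 (fun M : 'M_(b.+1, a.+1) => M (inord i.+1) (inord a)) FJ.
by rewrite /= mulmx_JnilE Jnil_mulmxE !inordK ?ltnn //=; lia.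
Qed.

Let Fn_diag j i : (i <= b)%N -> (j <= a)%N -> Fn i j = if (j <= i)%N then Fn (i - j) 0 else 0.
Proof.
elim: j i => [|j IH] i ib ja; first by rewrite subn0.
rewrite Fn_step // IH //; try lia.
by case: i ib => [|i] ib //=; rewrite subSS.
Qed.

Let Fn_top u : (u + a < b)%N -> Fn u 0 = 0.
Proof.
move=> uab; have := Fn_diag (ltnW uab) (leqnn a).
by rewrite leq_addl addnK Fn_last.
Qed.

Lemma Jnil_commute_shift_mx :
  F = \sum_(u < b.+1 | (b - a <= u)%N) F u 0 *: shift_mx k b.+1 a.+1 u.
Proof.
have F0 : F^~ 0 =1 Fn^~ 0%N.
  by move=> u; rewrite /Fn inord_val; congr (F _ _); apply: val_inj; rewrite /= inordK.
apply/matrixP => i j; rewrite summxE big_mkcond /=.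
rewrite (eq_bigr (fun u : 'I_b.+1 => Fn u 0 * ((i : nat) == j + u)%N%:R)) => [|u _]; last first.
  rewrite -F0; case: leqP => [_ | uab]; first by rewrite !mxE.
  by rewrite F0 Fn_top ?mul0r //; lia.
have -> : F i j = Fn i j by rewrite /Fn !inord_val.
rewrite (Fn_diag (ltn_ord i : i <= b)%N (ltn_ord j : j <= a)%N); case: leqP => ji.
  rewrite (eq_bigr (fun u : 'I_b.+1 => Fn u 0 * ((u : nat) == i - j)%N%:R)) => [|u _].
    have ijb : (i - j < b.+1)%N by have := ltn_ord i; lia.
    by rewrite (sum_delta_ord _ ijb) /Fn; congr (F _ _); apply: val_inj; rewrite /= inordK.
  by congr (_ * _%:R); apply/eqP/eqP; lia.
by rewrite big1 // => u _; rewrite (_ : _ == _ = false) ?mulr0 //; lia.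
Qed.

End Toeplitz.

Section RepHoms.
Variables (k : fieldType) (n g : nat) (lam : k).
Hypothesis g1n : (1 <= g <= n)%N.

Lemma Vrep_hom_const a b f :
  is_rep_hom (Vrep n g lam a) (Vrep n g lam b) f -> forall v w, f v = f w.
Proof.
move=> hf; apply: (@cycle_constant 'M[k]_(b, a) n g.-1 f); first lia.
move=> x xg; have := hf x; rewrite /Vrep /= (negbTE xg) mulmx1 mul1mx /Ksrc /Ktgt.
by case: ifP => _ ->.
Qed.

Lemma Vrep_hom_Jnil a b f v : is_rep_hom (Vrep n g lam a) (Vrep n g lam b) f ->
  f v *m Jnil k a = Jnil k b *m f v.
Proof.
move=> hf; pose x : 'I_n.+1 := inord g.-1; have xg : val x = g.-1 by rewrite /= inordK; lia.
have := hf x; rewrite /Vrep /Ksrc /Ktgt /= xg eqxx ifT; last lia.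
rewrite !(Vrep_hom_const hf _ v) mulmxDr mulmxDl mul_mx_scalar mul_scalar_mx.
exact: addrI.
Qed.

Lemma Vrep_hom_Fform m a b f : (a <= m.+1)%N -> (b <= m.+1)%N ->
  is_rep_hom (Vrep n g lam a.+1) (Vrep n g lam b.+1) f ->
  exists x, kQelt m a.+1 b.+1 x /\ forall v, f v = Fform a.+1 b.+1 x.
Proof.
move=> am bm hf; set F := f ord0.
have hpath u : (b - a <= u)%N -> (u <= b)%N -> qpath m a.+1 b.+1 (normal_word (a + u - b) u).
  move=> bau ub; rewrite [in X in qpath _ _ X](_ : b.+1 = a.+1 - (a + u - b) + u)%N; last lia.
  by apply: qpath_normal_word; lia.
exists [seq (F u 0, normal_word (a + u - b) u) | u in [pred u : 'I_b.+1 | b - a <= u]%N].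
split=> [|v].
  by apply/allP => c /mapP[u]; rewrite mem_enum => bau ->; exact: hpath bau (ltn_ord u).
rewrite (Vrep_hom_const hf v ord0) (Jnil_commute_shift_mx (Vrep_hom_Jnil ord0 hf)) /Fform.
rewrite big_map big_enum /=; apply: eq_big => [u | u /hpath /(_ (ltn_ord u)) up].
  by rewrite inE.
by rewrite (FQ_shift k up) ups_normal_word.
Qed.

End RepHoms.

Lemma FQ_is_rep_hom (k : fieldType) n g (lam : k) m a b w : qpath m a b w ->
  is_rep_hom (Vrep n g lam a) (Vrep n g lam b) (fun _ => FQ k a b w).
Proof.
move=> hw x; rewrite /= (FQ_shift k hw) /Vrep /=.
case: ifP => _; last by rewrite mulmx1 mul1mx.
rewrite mulmxDr mulmxDl mul_mx_scalar mul_scalar_mx shift_mx_Jnil //.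
by case/andP: hw => _ /eqP <-; apply: qend_le_ups.
Qed.

Unset Implicit Arguments.

Theorem mainTheorem4 (k : closedFieldType) (n g : nat) (lam : k) (m : nat) :
  (1 <= n)%N -> (1 <= g <= n)%N -> lam != 0 ->
  forall a b : nat, (1 <= a <= m.+2)%N -> (1 <= b <= m.+2)%N ->
  [/\ forall w : seq bool, qpath m a b w ->
        is_rep_hom (Vrep n g lam a) (Vrep n g lam b) (fun _ => FQ k a b w),
      forall x : seq (k * seq bool), kQelt m a b x ->
        (Fform a b x = 0 <-> in_ideal m a b x)
    & forall f : forall v : 'I_n.+1, 'M[k]_(b, a),
        is_rep_hom (Vrep n g lam a) (Vrep n g lam b) f ->
        exists x : seq (k * seq bool),
          kQelt m a b x /\ forall v : 'I_n.+1, f v = Fform a b x].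
Proof.
move=> _ g1n _ a b /andP[a1 am] /andP[b1 bm]; split.
- by move=> w; apply: FQ_is_rep_hom.
- by move=> x hx; split; [apply: Fform_kernel_in_ideal | apply: Fform_vanishes_on_ideal].
- by case: a a1 am => // a _ am; case: b b1 bm => // b _ bm f; apply: Vrep_hom_Fform.
Qed.
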